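(* Let $P\in\mathrm{Sym}(n,\mathbb{R})$ be invertible and $Q\in\mathrm{Mat}(n,\mathbb{R})$. For $\lambda\in\mathbb{R}$ let $B_\lambda=\begin{bmatrix}P^{-1}&-P^{-1}Q\\-Q^TP^{-1}&Q^TP^{-1}Q-\lambda P\end{bmatrix}$ and $J=\begin{bmatrix}0&-I_n\\ I_n&0\end{bmatrix}$. Then there exists $\widehat\lambda>0$ such that $JB_\lambda$ is hyperbolic for every $\lambda>\widehat\lambda$.
   Context: A real matrix is hyperbolic if it has no eigenvalue on the imaginary axis. *)

From HB Require Import structures.
From mathcomp Require Import all_boot all_order all_algebra.
From mathcomp Require Import complex.
From mathcomp Require Import reals.
Set Implicit Arguments. Unset Strict Implicit. Unset Printing Implicit Defensive.
Import Order.TTheory GRing.Theory Num.Theory.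
Local Open Scope ring_scope.

Definition hyperbolic (R : rcfType) (m : nat) (M : 'M[R]_m) : Prop :=
  forall z : R[i], eigenvalue (map_mx (real_complex R) M) z -> Re z != 0.

Definition Bmat (R : fieldType) (n : nat) (P Q : 'M[R]_n) (l : R)
  : 'M[R]_(n + n) :=
  block_mx (invmx P) (- (invmx P *m Q))
           (- (Q^T *m invmx P)) (Q^T *m invmx P *m Q - l *: P).

Definition Jmat (R : pzRingType) (n : nat) : 'M[R]_(n + n) :=
  block_mx 0 (- 1%:M) 1%:M 0.

From HB Require Import structures.
From mathcomp Require Import all_boot all_order all_algebra.
From mathcomp Require Import complex.
From mathcomp Require Import reals ring lra.
Import Order.TTheory GRing.Theory Num.Theory.
Local Open Scope ring_scope.

(* If (p, q) is a left eigenvector of J B_l for the eigenvalue z, eliminating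
   q leaves (l - z^2) p = z p A with A = (Q - Q^T) P^-1.  For z = i b this
   reads (l + b^2) p = i b p A, so l + b^2 <= |b| K, where K bounds the row
   sums of |A|.  As |b| K <= b^2 + K^2, no such b exists once l > K^2. *)

Lemma mulmx_Jmat_Bmat (F : fieldType) n (P Q : 'M[F]_n) l :
  Jmat F n *m Bmat P Q l =
  block_mx (Q^T *m invmx P) (l *: P - Q^T *m invmx P *m Q)
           (invmx P) (- (invmx P *m Q)).
Proof.
rewrite /Jmat /Bmat mulmx_block !mul0mx !mulNmx !mul1mx !add0r !addr0 opprK.
by rewrite opprB.
Qed.

Lemma Jmat_Bmat_eigenvalue (F : fieldType) n (P Q : 'M[F]_n) l z :
  P \in unitmx -> eigenvalue (Jmat F n *m Bmat P Q l) z ->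
  exists2 p : 'rV[F]_n, p != 0 &
    (l - z ^+ 2) *: p = z *: (p *m ((Q - Q^T) *m invmx P)).
Proof.
move=> Pu /eigenvalueP [v]; rewrite -(hsubmxK v); move: (lsubmx v) (rsubmx v).
move=> p q; rewrite mulmx_Jmat_Bmat mul_row_block scale_row_mx.
move=> /eq_row_mx [Ep Eq] v_neq0.
have qPi : q *m invmx P = z *: p - p *m (Q^T *m invmx P) by rewrite -Ep addrC addKr.
have qE : q = z *: (p *m P) - p *m Q^T.
  by rewrite -[q](mulmxKV Pu) qPi mulmxBl -scalemxAl mulmxA mulmxKV.
have pPE : (l - z ^+ 2) *: (p *m P) = z *: (p *m (Q - Q^T)).
  move: Eq; rewrite mulmxN mulmxA qPi qE mulmxBl mulmxBr mulmxDr mulmxN !mulmxA.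
  rewrite -!scalemxAr -scalemxAl.
  (* What remains is linear in these four vectors: check it entrywise. *)
  move: (p *m P) (p *m Q) (p *m Q^T) (p *m Q^T *m invmx P *m Q) => a b c d.
  move=> /rowP E; apply/rowP => j; move: (E j); rewrite !mxE => Ej.
  apply/eqP; rewrite -subr_eq0; apply/eqP.
  by rewrite -(subrr (z * (z * a 0 j - c 0 j))) -{1}Ej; ring.
exists p.
  by apply: contraNneq v_neq0 => p0; rewrite qE p0 !mul0mx scaler0 subrr row_mx0.
by rewrite mulmxA scalemxAl -pPE -scalemxAl mulmxK.
Qed.

Lemma left_eigen_norm_le {F : numDomainType} {n} {A : 'M[F]_n} {K : F}
    {v : 'rV[F]_n} {c d : F} :
  (forall i, \sum_j `|A i j| <= K) -> v != 0 ->
  d *: v = c *: (v *m A) -> `|d| <= `|c| * K.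
Proof.
(* Summing over all entries, rather than picking a largest one, keeps the
   argument valid without a total order on F. *)
move=> rowA v0 eqv.
set s : F := \sum_k `|v 0 k|.
have s_gt0 : 0 < s.
  rewrite lt_def sumr_ge0 // andbT; apply: contra v0 => /eqP/psumr_eq0P v_0.
  apply/eqP/rowP => k; rewrite mxE; apply: normr0_eq0.
  exact: v_0 (fun _ _ => normr_ge0 _) k isT.
have entry k : d * v 0 k = c * \sum_j v 0 j * A j k.
  by have /rowP/(_ k) := eqv; rewrite !mxE.
suff : `|d| * s <= `|c| * K * s by rewrite ler_pM2r.
apply: (@le_trans _ _ (`|c| * \sum_k \sum_j `|v 0 j| * `|A j k|)).
  rewrite /s !mulr_sumr; apply: ler_sum => k _.
  rewrite -normrM entry normrM ler_wpM2l //.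
  by under [X in _ <= X]eq_bigr do rewrite -normrM; apply: ler_norm_sum.
rewrite -mulrA ler_wpM2l // exchange_big /s mulr_sumr; apply: ler_sum => j _.
by rewrite -mulr_sumr mulrC ler_wpM2r.
Qed.

Lemma map_Jmat_Bmat (F F' : fieldType) (f : {rmorphism F -> F'}) n
    (P Q : 'M[F]_n) l :
  map_mx f (Jmat F n *m Bmat P Q l) =
  Jmat F' n *m Bmat (map_mx f P) (map_mx f Q) (f l).
Proof.
rewrite map_mxM /Jmat /Bmat !map_block_mx !map_mxN map_mx0 map_mx1 map_mxB.
by rewrite !map_mxM map_mxZ map_invmx map_trmx.
Qed.

Local Open Scope complex_scope.

Lemma normC_real (R : rcfType) (x : R) : `|x%:C| = `|x|%:C.
Proof. by rewrite normc_def /= expr0n addr0 sqrtr_sqr. Qed.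

Lemma normC_imaginary (R : rcfType) (b : R) : `|0 +i* b| = `|b|%:C.
Proof. by rewrite normc_def /= expr0n add0r sqrtr_sqr. Qed.

Lemma sqrC_imaginary (R : rcfType) (b : R) : (0 +i* b) ^+ 2 = - (b ^+ 2)%:C.
Proof. by rewrite expr2; simpc; rewrite -expr2. Qed.

Lemma row_normC_sum_le {R : rcfType} {m n} (A : 'M[R]_(m, n)) i :
  \sum_j `|map_mx (real_complex R) A i j| <= (\sum_i \sum_j `|A i j|)%:C.
Proof.
under eq_bigr do rewrite mxE normC_real.
rewrite -rmorph_sum lecR [leRHS](bigD1 i) //= lerDl.
by apply: sumr_ge0 => k _; apply: sumr_ge0.
Qed.

Lemma Jmat_Bmat_imaginary_eigenvalue {R : rcfType} {n} {P Q : 'M[R]_n} {l b} :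
  P \in unitmx ->
  eigenvalue (map_mx (real_complex R) (Jmat R n *m Bmat P Q l)) (0 +i* b) ->
  `|l + b ^+ 2| <= `|b| * \sum_i \sum_j `|((Q - Q^T) *m invmx P) i j|.
Proof.
move=> Pu; rewrite map_Jmat_Bmat => /Jmat_Bmat_eigenvalue[].
  by rewrite map_unitmx.
move=> p p_neq0; rewrite map_trmx -map_mxB -map_invmx -map_mxM.
rewrite sqrC_imaginary opprK -rmorphD.
move=> /(left_eigen_norm_le (row_normC_sum_le _) p_neq0).
by rewrite !normC_real normC_imaginary -rmorphM lecR.
Qed.

Theorem corollary2p5 (R : realType) (n : nat) (P Q : 'M[R]_n) :
  P^T = P -> P \in unitmx ->
  exists lhat : R, 0 < lhat /\
    forall l : R, lhat < l -> hyperbolic (Jmat R n *m Bmat P Q l).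
Proof.
move=> _ Pu; set K : R := \sum_i \sum_j `|((Q - Q^T) *m invmx P) i j|.
have K_ge0 : 0 <= K by apply: sumr_ge0 => i _; apply: sumr_ge0.
have lhat_gt0 : 0 < K ^+ 2 + 1 by rewrite ltr_wpDl ?sqr_ge0.
exists (K ^+ 2 + 1); split=> // l lhat_lt_l [a b].
rewrite -complexRe /= => eig_b; apply/eqP => /complexI a0; move: eig_b.
rewrite {}a0 => /(Jmat_Bmat_imaginary_eigenvalue Pu); rewrite -/K.
have l_gt0 : 0 < l := lt_trans lhat_gt0 lhat_lt_l.
rewrite ger0_norm ?addr_ge0 ?sqr_ge0 ?(ltW l_gt0) // -(real_normK (num_real b)).
have := normr_ge0 b; move: `|b| => t; nra.
Qed.
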